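(* If $G$ is a graph of girth at least $7$, then $\chi_{\mu_2}(G)\ge \gamma(G)$.
   Context: The girth of $G$ is the length of a shortest cycle (infinite for forests). $\gamma(G)$ is the domination number: the minimum size of a set $D\subseteq V(G)$ such that every vertex outside $D$ has a neighbor in $D$. A set $M\subseteq V(G)$ is a $2$-distance mutual-visibility set if for every two vertices $u,v\in M$ there exists a shortest $u,v$-path of length at most $2$ none of whose internal vertices lies in $M$. $\chi_{\mu_2}(G)$ is the minimum cardinality of a partition of $V(G)$ into $2$-distance mutual-visibility sets. *)

From mathcomp Require Import all_boot.
Set Implicit Arguments. Unset Strict Implicit. Unset Printing Implicit Defensive.

(* A (finite, simple) graph is a symmetric irreflexive relation e on a finType T. *)

(* girth at least k: every cycle (a duplicate-free closed walk v0 ... v_{m-1} v0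
   with m >= 3 vertices) has at least k vertices; forests satisfy this vacuously. *)
Definition girth_ge (T : finType) (e : rel T) (k : nat) : Prop :=
  forall c : seq T, uniq c -> cycle e c -> 3 <= size c -> k <= size c.

Definition dominating (T : finType) (e : rel T) (D : {set T}) : bool :=
  [forall x, (x \notin D) ==> [exists y in D, e x y]].

Definition domination_number (T : finType) (e : rel T) : nat :=
  #|[arg min_(D < [set: T] | dominating e D) #|D|]|.

Definition shortest_path (T : finType) (e : rel T) (u : T) (p : seq T) (v : T) : Prop :=
  [/\ path e u p, last u p = v &
      forall q : seq T, path e u q -> last u q = v -> size p <= size q].

(* internal vertices of the path u :: p *)
Definition internal (T : finType) (u : T) (p : seq T) : seq T := behead (belast u p).

Definition dmv2 (T : finType) (e : rel T) (M : {set T}) : Prop :=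
  forall u v, u \in M -> v \in M ->
    exists p : seq T, [/\ shortest_path e u p v, size p <= 2 &
                          all (fun x => x \notin M) (internal u p)].

(* P is a partition of V(G) into 2-distance mutual-visibility sets;
   chi_mu2(G) is the minimum of #|P| over such P. *)
Definition dmv2_partition (T : finType) (e : rel T) (P : {set {set T}}) : Prop :=
  partition P [set: T] /\ (forall B, B \in P -> dmv2 e B).

(* A 2-distance mutual-visibility set has diameter at most 2.  In a graph of
   girth at least 7, a nonempty set B of diameter at most 2 lies in a closed
   neighbourhood N[d]: if B contains an edge uv, then B lies in N[u] or in N[v],
   since otherwise a 3-, 4- or 5-cycle appears; if B is independent, two of its
   vertices have a common neighbour x, and any other vertex of B not adjacent
   to x closes a 4- or 6-cycle.  Choosing such a centre d for every part of a
   partition yields a dominating set with at most as many vertices as parts. *)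

From mathcomp Require Import all_boot.

Set Implicit Arguments. Unset Strict Implicit. Unset Printing Implicit Defensive.

Section DistanceTwo.

Variables (T : finType) (e : rel T).

Definition closed_nbhd (d : T) : {set T} := [set w | (w == d) || e d w].

Definition dist_le2 (u v : T) : Prop :=
  [\/ u = v, e u v | exists2 x, e u x & e x v].

Lemma dmv2_dist_le2 (B : {set T}) : dmv2 e B -> {in B &, forall u v, dist_le2 u v}.
Proof.
move=> dmvB u v uB vB; have [p [[pathp lastp _] sizep _]] := dmvB u v uB vB.
rewrite /dist_le2; move: pathp lastp sizep; case: p => [|x [|y [|? ?]]] //=.
- by move=> _ <- _; apply: Or31.
- by rewrite andbT => uv <- _; apply: Or32.
- by rewrite andbT => /andP[ux xy] <- _; apply: Or33; exists x.
Qed.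

Hypotheses (e_sym : symmetric e) (e_irr : irreflexive e) (e_girth : girth_ge e 7).

Lemma edge_neq x y : e x y -> x != y.
Proof. by apply: contraTneq => ->; rewrite e_irr. Qed.

Lemma no_cycle3 a b c : e a b -> e b c -> e c a -> False.
Proof.
move=> ab bc ca; suff: 7 <= 3 by [].
apply: (e_girth (c := [:: a; b; c])) => //=; last by rewrite ab bc ca.
by rewrite !inE !negb_or (edge_neq ab) (edge_neq bc) eq_sym (edge_neq ca).
Qed.

Lemma no_cycle4 a b c d :
  e a b -> e b c -> e c d -> e d a -> a != c -> b != d -> False.
Proof.
move=> ab bc cd da ac bd; suff: 7 <= 4 by [].
apply: (e_girth (c := [:: a; b; c; d])) => //=; last by rewrite ab bc cd da.
rewrite !inE !negb_or (edge_neq ab) (edge_neq bc) (edge_neq cd).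
by rewrite (eq_sym a d) (edge_neq da) ac bd.
Qed.

Lemma no_cycle5 a b c d f :
  e a b -> e b c -> e c d -> e d f -> e f a ->
  a != c -> a != d -> b != d -> b != f -> c != f -> False.
Proof.
move=> ab bc cd df fa ac ad bd bf cf; suff: 7 <= 5 by [].
apply: (e_girth (c := [:: a; b; c; d; f])) => //=; last by rewrite ab bc cd df fa.
rewrite !inE !negb_or (edge_neq ab) (edge_neq bc) (edge_neq cd) (edge_neq df).
by rewrite (eq_sym a f) (edge_neq fa) ac ad bd bf cf.
Qed.

Lemma no_cycle6 a b c d f g :
  e a b -> e b c -> e c d -> e d f -> e f g -> e g a ->
  a != c -> a != d -> a != f -> b != d -> b != f -> b != g ->
  c != f -> c != g -> d != g -> False.
Proof.
move=> ab bc cd df fg ga ac ad af bd bf bg cf cg dg; suff: 7 <= 6 by [].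
apply: (e_girth (c := [:: a; b; c; d; f; g])) => //=.
  rewrite !inE !negb_or (edge_neq ab) (edge_neq bc) (edge_neq cd).
  by rewrite (edge_neq df) (edge_neq fg) (eq_sym a g) (edge_neq ga) ac ad af bd bf bg cf cg dg.
by rewrite ab bc cd df fg ga.
Qed.

Lemma dist_le2_edge_cover u v w :
  e u v -> dist_le2 u w -> dist_le2 v w -> w \in closed_nbhd u :|: closed_nbhd v.
Proof.
move=> uv [<-|uw|[x ux xw]]; first by rewrite !inE eqxx.
  by rewrite !inE uw orbT.
move=> [<-|vw|[y vy yw]]; first by rewrite !inE eqxx orbT.
  by rewrite !inE vw !orbT.
apply/negPn/negP; rewrite !inE !negb_or => /andP[/andP[wu nuw] /andP[wv nvw]].
have [yx|yx] := eqVneq y x; first by subst y; apply: (no_cycle3 uv vy); rewrite e_sym.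
apply: (no_cycle5 uv vy yw _ _ _ _ _ _ yx); rewrite 1?e_sym // 1?eq_sym //.
- by apply: contraNneq nuw => <-.
- by apply: contraNneq nvw => <-.
Qed.

Lemma not_dist_le2_across_edge u v w1 w2 :
  e u v -> e v w1 -> e u w2 ->
  w1 \notin closed_nbhd u -> w2 \notin closed_nbhd v -> ~ dist_le2 w1 w2.
Proof.
rewrite !inE !negb_or => uv vw1 uw2 /andP[w1u nuw1] /andP[w2v nvw2].
have uw1 : u != w1 by rewrite eq_sym.
have vw2 : v != w2 by rewrite eq_sym.
case=> [w12|w1w2|[z w1z zw2]].
- by subst w2; rewrite uw2 in nuw1.
- by apply: (no_cycle4 uv vw1 w1w2 _ uw1 vw2); rewrite e_sym.
- apply: (no_cycle5 uv vw1 w1z zw2 _ uw1 _ _ vw2); rewrite 1?e_sym //.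
  + by apply: contraNneq nuw1 => ->; rewrite e_sym.
  + by apply: contraNneq nvw2 => ->.
  + by apply: contraNneq nuw1 => ->.
Qed.

Lemma common_nbr_dist_le2 u v x w :
  e u x -> e x v -> u != v -> ~~ e u w -> ~~ e v w ->
  dist_le2 u w -> dist_le2 v w -> e x w.
Proof.
move=> ux xv uv nuw nvw.
have [<-|uw] := eqVneq u w; first by rewrite e_sym.
have [<-|vw] := eqVneq v w; first by [].
case=> [eq_uw|e_uw|[y uy yw]]; first by rewrite eq_uw eqxx in uw.
  by rewrite e_uw in nuw.
case=> [eq_vw|e_vw|[z vz zw]]; first by rewrite eq_vw eqxx in vw.
  by rewrite e_vw in nvw.
have [<-|yx] := eqVneq y x; first by [].
have [<-|zx] := eqVneq z x; first by [].
exfalso; have [yz|yz] := eqVneq y z.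
  by subst z; apply: (no_cycle4 ux xv vz _ uv); rewrite 1?e_sym // eq_sym.
apply: (no_cycle6 ux xv vz zw (_ : e w y) (_ : e y u) uv _ uw _ _ _ vw);
  rewrite 1?e_sym 1?(eq_sym x) //.
- by apply: contraNneq nuw => ->.
- by apply: contraNneq nuw => ->.
- by apply: contraNneq nvw => ->.
- by rewrite eq_sym.
Qed.

Section CloseSet.

Variable B : {set T}.
Hypothesis closeB : {in B &, forall a b, dist_le2 a b}.

Lemma edge_close_set_sub u v :
  u \in B -> v \in B -> e u v -> B \subset closed_nbhd u \/ B \subset closed_nbhd v.
Proof.
move=> uB vB uv.
have [|/subsetPn[w1 w1B w1u]] := boolP (B \subset closed_nbhd u); first by left.
right; apply/subsetP=> w2 w2B; apply/negPn/negP=> w2v.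
have vw1 : e v w1.
  have := dist_le2_edge_cover uv (closeB uB w1B) (closeB vB w1B).
  rewrite inE (negbTE w1u) /= inE => /orP[/eqP w1v|//].
  by move: w1u; rewrite w1v inE uv orbT.
have uw2 : e u w2.
  have := dist_le2_edge_cover uv (closeB uB w2B) (closeB vB w2B).
  rewrite inE (negbTE w2v) orbF inE => /orP[/eqP w2u|//].
  by move: w2v; rewrite w2u inE e_sym uv orbT.
exact: not_dist_le2_across_edge uv vw1 uw2 w1u w2v (closeB w1B w2B).
Qed.

Lemma indep_close_set_sub u v :
  {in B &, forall a b, ~~ e a b} -> u \in B -> v \in B -> u != v ->
  exists d, B \subset closed_nbhd d.
Proof.
move=> indepB uB vB uv.
case: (closeB uB vB) => [eq_uv|e_uv|[x ux xv]].
- by rewrite eq_uv eqxx in uv.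
- by move: (indepB _ _ uB vB); rewrite e_uv.
exists x; apply/subsetP=> w wB; rewrite inE; apply/orP; right.
exact: common_nbr_dist_le2 ux xv uv (indepB _ _ uB wB) (indepB _ _ vB wB)
  (closeB uB wB) (closeB vB wB).
Qed.

Lemma close_set_sub_closed_nbhd : B != set0 -> exists d, B \subset closed_nbhd d.
Proof.
move=> /set0Pn[u uB].
have [/existsP[a /existsP[b /and3P[aB bB ab]]]|noedge] :=
  boolP [exists a, exists b, [&& a \in B, b \in B & e a b]].
  by have [] := edge_close_set_sub aB bB ab; [exists a | exists b].
have indepB : {in B &, forall a b, ~~ e a b}.
  move=> a b aB bB; apply: contraNN noedge => ab.
  by apply/existsP; exists a; apply/existsP; exists b; rewrite aB bB ab.
have [subu|/subsetPn[v vB]] := boolP (B \subset [set u]).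
  by exists u; apply: subset_trans subu _; rewrite sub1set inE eqxx.
by rewrite inE eq_sym => uv; apply: indep_close_set_sub indepB uB vB uv.
Qed.

End CloseSet.

Lemma domination_number_le_card D : dominating e D -> domination_number e <= #|D|.
Proof.
move=> domD; rewrite /domination_number.
have domT : dominating e [set: T] by apply/forallP=> x; rewrite inE.
by case: arg_minnP => // A _; apply.
Qed.

Lemma domination_number_le_nbhd_cover (P : {set {set T}}) :
  cover P = [set: T] -> {in P, forall B : {set T}, exists d, B \subset closed_nbhd d} ->
  domination_number e <= #|P|.
Proof.
move=> coverP nbhdP; have [x0 _|T0] := pickP (@predT T); last first.
  have dom0 : dominating e set0 by apply/forallP=> x; have := T0 x.
  by apply: leq_trans (domination_number_le_card dom0) _; rewrite cards0.
pose center (B : {set T}) := odflt x0 [pick d | B \subset closed_nbhd d].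
apply: (leq_trans _ (leq_imset_card center P)).
apply: domination_number_le_card; apply/forallP=> x; apply/implyP=> xD.
have /bigcupP[B BP xB] : x \in cover P by rewrite coverP inE.
have centerB : B \subset closed_nbhd (center B).
  rewrite /center; case: pickP => [d //|none].
  by have [d] := nbhdP B BP; rewrite none.
have := subsetP centerB x xB; rewrite inE => /orP[/eqP xc|cx].
  by rewrite xc imset_f in xD.
by apply/existsP; exists (center B); rewrite imset_f // e_sym.
Qed.

End DistanceTwo.

Theorem theorem3p4 (T : finType) (e : rel T)
    (e_sym : symmetric e) (e_irr : irreflexive e)
    (hgirth : girth_ge e 7) :
  forall P : {set {set T}}, dmv2_partition e P -> domination_number e <= #|P|.
Proof.
move=> P [/and3P[/eqP coverP _ P0] dmv2P].
apply: (domination_number_le_nbhd_cover e_sym coverP) => B BP.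
apply: (close_set_sub_closed_nbhd e_sym e_irr hgirth).
- exact: dmv2_dist_le2 (dmv2P B BP).
- by apply: contraNneq P0 => <-.
Qed.
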